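(* Let $A$ be a $\{0,1\}$-matrix and let $\mathcal{C}\subset B_*(X_A)$ be a right Markov code for $(X_A,\sigma_A)$. Suppose that $X_A$ has a fixed point $a^\infty=(a,a,a,\dots)\in X_A$ for some $a\in\Sigma_A$. Then for $m\ge1$, the word $a^m=a a\cdots a$ ($m$ letters) belongs to $\mathcal{C}$ if and only if $m=1$.
   Context: For an $N\times N$ matrix $A$ with entries in $\{0,1\}$, $\Sigma_A=\{1,\dots,N\}$, $X_A$ is the set of sequences $(x_n)_{n\in\mathbb{N}}$ in $\Sigma_A$ with $A(x_n,x_{n+1})=1$ for all $n$, with shift $\sigma_A((x_n)_n)=(x_{n+1})_n$. $B_k(X_A)$ is the set of admissible words of length $k$, $B_*(X_A)$ the union over $k\ge0$ (including the empty word). For a word $w=w_1\cdots w_\ell$, $\sigma_A(w)=w_2\cdots w_\ell$. A code is a nonempty $\mathcal{C}\subset B_*(X_A)$ such that any equality of concatenations $\omega(i_1)\cdots\omega(i_k)=\omega(j_1)\cdots\omega(j_n)$ of words of $\mathcal{C}$ forces $n=k$ and $\omega(i_m)=\omega(j_m)$ for all $m$; a prefix code is a code in which no word is a prefix of another. A finite prefix code $\mathcal{C}=\{\omega(1),\dots,\omega(M)\}\subset B_*(X_A)$, $\Sigma_{A(\mathcal{C})}=\{1,\dots,M\}$, is a right Markov code for $(X_A,\sigma_A)$ if: (i) for every $\gamma\in B_*(X_A)$ there is $\eta\in B_*(X_A)$ with $\gamma\eta\in B_*(X_A)$ and a unique finite sequence $(i_1,\dots,i_k)$ in $\Sigma_{A(\mathcal{C})}$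 with $\gamma\eta=\omega(i_1)\cdots\omega(i_k)$; (ii) there is $L\in\mathbb{N}$ such that for all $i_1,\dots,i_L$ with $\omega(i_1)\cdots\omega(i_L)\in B_*(X_A)$ there exist $j_1,\dots,j_k\in\Sigma_{A(\mathcal{C})}$ with $\sigma_A(\omega(i_1))\omega(i_2)\cdots\omega(i_L)=\omega(j_1)\cdots\omega(j_k)$; (iii) for every $i,j$ there are $n_1,\dots,n_l$ with $\omega(i)\omega(n_1)\cdots\omega(n_l)\omega(j)\in B_*(X_A)$. *)

From mathcomp Require Import all_boot all_order all_algebra.
Set Implicit Arguments. Unset Strict Implicit. Unset Printing Implicit Defensive.

(* Alphabet Sigma_A = {1,..,N} is represented by 'I_N (0-based).
   A is an N x N matrix with entries in {0,1} (stated as a hypothesis). *)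
Definition word (N : nat) := seq 'I_N.

Definition in_XA (N : nat) (A : 'M[nat]_N) (x : nat -> 'I_N) : Prop :=
  forall n, A (x n) (x n.+1) = 1%N.

(* B_*(X_A): words occurring in points of X_A (equivalently, by shift
   invariance, initial segments of points of X_A); includes the empty word. *)
Definition inB (N : nat) (A : 'M[nat]_N) (w : word N) : Prop :=
  exists x : nat -> 'I_N, in_XA A x /\ w = mkseq x (size w).

Definition sigmaw (N : nat) (w : word N) : word N := behead w.

(* A finite set of words C, given as a duplicate-free list; a "factorization"
   is a finite sequence of codewords. *)
Definition codeseq (N : nat) (C : seq (word N)) (ws : seq (word N)) : bool :=
  all (fun w => w \in C) ws.

Definition is_code (N : nat) (C : seq (word N)) : Prop :=
  C != [::] /\
  forall ws vs, codeseq C ws -> codeseq C vs -> flatten ws = flatten vs -> ws = vs.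

Definition is_prefix_code (N : nat) (C : seq (word N)) : Prop :=
  is_code C /\
  forall u v, u \in C -> v \in C -> prefix u v -> u = v.

Definition right_Markov_code (N : nat) (A : 'M[nat]_N) (C : seq (word N)) : Prop :=
  uniq C /\
  (forall w, w \in C -> inB A w) /\
  is_prefix_code C /\
  (forall g, inB A g ->
     exists eta, inB A eta /\ inB A (g ++ eta) /\
       exists! ws, codeseq C ws /\ flatten ws = g ++ eta) /\
  (exists L : nat, (0 < L)%N /\
     forall ws, size ws = L -> codeseq C ws -> inB A (flatten ws) ->
       exists vs, codeseq C vs /\
         sigmaw (head [::] ws) ++ flatten (behead ws) = flatten vs) /\
  (forall u v, u \in C -> v \in C ->
     exists ns, codeseq C ns /\ inB A (u ++ flatten ns ++ v)).

From mathcomp Require Import all_boot all_order all_algebra.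

Set Implicit Arguments.
Unset Strict Implicit.
Unset Printing Implicit Defensive.

(** In a prefix code containing a^m, every factorization of a power a^n into
    codewords uses only the codeword a^m, so m divides n. Applying the shift
    condition (ii) to L copies of a^m factors a^(Lm-1), whence m divides
    Lm - 1 and therefore m = 1. Conversely, by condition (i) some long power
    a^n begins a factorization; its first codeword is shorter than a^n, hence
    a nonempty power of a, and by the first part it is the letter a. *)

Lemma prefix_nseq (T : eqType) (a : T) i j :
  i <= j -> prefix (nseq i a) (nseq j a).
Proof. by move=> le_ij; rewrite -(subnKC le_ij) nseqD prefix_prefix. Qed.

Lemma nseq_prefix_cat (T : Type) (a : T) (v s t : seq T) n :
  size v <= n -> v ++ s = nseq n a ++ t -> v = nseq (size v) a.
Proof.
move=> le_v_n /(congr1 (take (size v))).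
by rewrite take_size_cat // takel_cat ?size_nseq // take_nseq.
Qed.

Lemma behead_nseq (T : Type) (a : T) n : behead (nseq n a) = nseq n.-1 a.
Proof. by case: n. Qed.

Lemma flatten_nseq_nseq (T : Type) (a : T) k m :
  flatten (nseq k (nseq m a)) = nseq (k * m) a.
Proof. by elim: k => //= k IHk; rewrite IHk mulSn nseqD. Qed.

Lemma inB_nseq (N : nat) (A : 'M[nat]_N) (a : 'I_N) k :
  in_XA A (fun _ => a) -> inB A (nseq k a).
Proof.
move=> fix_a; exists (fun _ => a); split=> //.
by rewrite -[LHS](mkseq_nth a); apply: eq_mkseq => i; rewrite nth_nseq if_same.
Qed.

Lemma code_nil_notin (N : nat) (C : seq (word N)) : is_code C -> [::] \notin C.
Proof.
case=> _ codeC; apply/negP => C_nil.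
by have := codeC [:: [::]] [::]; rewrite /codeseq /= C_nil => /(_ isT isT erefl).
Qed.

Lemma sigmaw_head_flatten (N : nat) (ws : seq (word N)) :
  head [::] ws != [::] -> sigmaw (head [::] ws) ++ flatten (behead ws) = sigmaw (flatten ws).
Proof. by case: ws => [|[|x w] ws]. Qed.

Section PrefixCodes.

Variables (N : nat) (C : seq (word N)).
Hypothesis prefC : is_prefix_code C.

Lemma prefix_code_nseq_inj (a : 'I_N) k m :
  nseq k a \in C -> nseq m a \in C -> k = m.
Proof.
case: prefC => _ prefixC.
wlog le_km : k m / k <= m => [sym Ck Cm | Ck Cm].
  by case/orP: (leq_total k m) => le; [|symmetry]; apply: sym.
by have /(congr1 size) := prefixC _ _ Ck Cm (prefix_nseq a le_km); rewrite !size_nseq.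
Qed.

Lemma prefix_code_flatten_nseq (a : 'I_N) m vs n :
  nseq m a \in C -> codeseq C vs -> flatten vs = nseq n a -> n = m * size vs.
Proof.
move=> Cm; elim: vs n => [|v vs IHvs] n /=.
  by move=> _ /(congr1 size); rewrite size_nseq muln0.
case/andP=> Cv Cvs flatten_eq.
have le_v_n : size v <= n.
  by rewrite -(size_nseq n a) -flatten_eq size_cat leq_addr.
have def_v : v = nseq (size v) a.
  by apply: (nseq_prefix_cat (t := [::]) le_v_n); rewrite cats0; exact: flatten_eq.
have size_v : size v = m by apply: prefix_code_nseq_inj Cm; rewrite -def_v.
have flatten_vs : flatten vs = nseq (n - m) a.
  by rewrite -size_v -drop_nseq -flatten_eq drop_size_cat.
by rewrite mulnS -(IHvs _ Cvs flatten_vs) subnKC // -size_v.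
Qed.

End PrefixCodes.

Section MarkovCodeFixedPoint.

Variables (N : nat) (A : 'M[nat]_N) (C : seq (word N)) (a : 'I_N).
Hypotheses (markovC : right_Markov_code A C) (fix_a : in_XA A (fun _ => a)).

Lemma Markov_code_nseq_eq1 m : nseq m a \in C -> m = 1.
Proof.
case: markovC => _ [_ [prefC [_ [[L [L_gt0 shiftC]] _]]]] Cm.
have m_gt0 : 0 < m.
  by case: m Cm => // Cnil; case/negP: (code_nil_notin prefC.1).
set ws := nseq L (nseq m a).
have codeL : codeseq C ws by apply/allP => w /nseqP[->].
have inBL : inB A (flatten ws) by rewrite flatten_nseq_nseq; apply: inB_nseq.
have [vs [Cvs]] := shiftC ws (size_nseq _ _) codeL inBL.
have head_ws : head [::] ws = nseq m a.
  by rewrite -[head _ _]/(nth [::] ws 0) nth_nseq L_gt0.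
have head_ws_nil : head [::] ws != [::].
  by rewrite head_ws -size_eq0 size_nseq -lt0n.
rewrite sigmaw_head_flatten // /sigmaw flatten_nseq_nseq behead_nseq mulnC.
move=> /esym /(prefix_code_flatten_nseq prefC Cm Cvs) shift_eq.
have dvd_m_pred : m %| (m * L).-1 by rewrite shift_eq dvdn_mulr.
have : m %| m * L - (m * L).-1 by rewrite dvdn_sub ?dvdn_mulr.
have -> : m * L - (m * L).-1 = 1 by rewrite -subn1 subKn // muln_gt0 m_gt0.
by rewrite dvdn1 => /eqP.
Qed.

Lemma Markov_code_letter_in : nseq 1 a \in C.
Proof.
case: markovC => _ [_ [prefC [factorC _]]].
set n := (\max_(w <- C) size w).+1.
have [eta [_ [_ [[|w ws] [[Cws flatten_eq] _]]]]] := factorC _ (inB_nseq n fix_a).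
  by move: flatten_eq; rewrite /n.
have /andP[Cw _] := Cws.
have lt_w_n : size w < n by rewrite ltnS (@leq_bigmax_seq _ C predT size w Cw isT).
have def_w := nseq_prefix_cat (ltnW lt_w_n) flatten_eq.
have Cnseq_w : nseq (size w) a \in C by rewrite -def_w.
by rewrite -(Markov_code_nseq_eq1 Cnseq_w).
Qed.

End MarkovCodeFixedPoint.

Theorem mainTheorem5 (N : nat) (A : 'M[nat]_N) (C : seq (word N))
  (A01 : forall i j, A i j = 0%N \/ A i j = 1%N)
  (HC : right_Markov_code A C)
  (a : 'I_N) (Hfix : in_XA A (fun _ => a)) :
  forall m : nat, (1 <= m)%N -> ((nseq m a \in C) <-> m = 1%N).
Proof.
move=> m _; split; first exact: (Markov_code_nseq_eq1 HC Hfix (m := m)).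
by move->; exact: Markov_code_letter_in HC Hfix.
Qed.
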